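(* Let $T=\{t_1,\ldots,t_N\}$ be documents containing words from a dictionary $\{w_1,\ldots,w_D\}$, and let $\#(w)$ denote the number of documents containing word $w$. Let $h_1,\ldots,h_k$ be hash functions whose values $h_j(t)$ are independent and uniform on $[0,1]$. Consider the mapper MinHashSampleMap which, for each document $t$, each word $w$ in $t$, and each $j=1,\ldots,k$, emits $((w,j)\to h_j(t))$ if and only if $h_j(t)\le\frac{c\log(Dk)}{\#(w)}$, where $c=3$. Then the expected total number of emitted key-value pairs (shuffle size) is at most $cDk\log(Dk)=O(Dk\log(Dk))$; in particular, with $k=1/\epsilon$ for $\epsilon\in(0,1]$, it is $O((D/\epsilon)\log(D/\epsilon))$.
   Context: $\log$ denotes the natural logarithm. The shuffle size is the total number of key-value pairs emitted by all mappers. *)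

From HB Require Import structures.
From mathcomp Require Import all_boot all_order all_algebra.
From mathcomp Require Import all_classical all_reals all_analysis.
Set Implicit Arguments. Unset Strict Implicit. Unset Printing Implicit Defensive.
Import Order.TTheory GRing.Theory Num.Theory.
Local Open Scope classical_set_scope.
Local Open Scope ring_scope.

Definition ndocs (N D : nat) (docs : 'I_N -> {set 'I_D}) (w : 'I_D) : nat :=
  #|[set t | w \in docs t]|.

Definition threshold {R : realType} (c : R) (N D k : nat)
    (docs : 'I_N -> {set 'I_D}) (w : 'I_D) : R :=
  c * ln ((D * k)%:R) / (ndocs docs w)%:R.

(* Shuffle size of MinHashSampleMap: number of triples (t, w in t, j) with
   h_j(t) <= c log(Dk)/#(w); each such triple emits one pair ((w,j) -> h_j(t)). *)
Definition shuffle_size {R : realType} {d} {Omega : measurableType d}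
    (c : R) (N D k : nat) (docs : 'I_N -> {set 'I_D})
    (h : 'I_N -> 'I_k -> Omega -> R) (om : Omega) : R :=
  \sum_(t < N) \sum_(w in docs t) \sum_(j < k)
     (if h t j om <= threshold c k docs w then 1 else 0).

Definition mutually_independent {R : realType} {d} {Omega : measurableType d}
    (P : probability Omega R) (I : finType) (X : I -> {RV P >-> R}) : Prop :=
  forall (J : {set I}) (B : I -> set R),
    (forall i, measurable (B i)) ->
    P (\big[setI/setT]_(i in J) (X i @^-1` B i)) =
    (\prod_(i in J) P (X i @^-1` B i))%E.

From HB Require Import structures.
From mathcomp Require Import all_boot all_order all_algebra.
From mathcomp Require Import all_classical all_reals all_analysis.
From mathcomp Require Import ring.
Import Order.TTheory GRing.Theory Num.Theory.
Local Open Scope classical_set_scope.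
Local Open Scope ring_scope.

(* By linearity of expectation the shuffle size has expectation
   sum_t sum_(w in t) sum_j P(h_j(t) <= c log(Dk)/#(w)), and a uniform variable
   gives each term probability at most c log(Dk)/#(w).  Each word w occurs in
   exactly #(w) documents, so the factor 1/#(w) cancels and the total is at
   most D k c log(Dk). *)

Lemma uniform_probE (R : realType) (a b : R) (ab : a < b) (A : set R) :
  measurable A ->
  uniform_prob ab A = (((b - a)^-1)%:E * lebesgue_measure (A `&` `[a, b]))%E.
Proof.
move=> mA; rewrite /uniform_prob integral_uniform_pdf.
rewrite (eq_integral (fun=> ((b - a)^-1)%:E)) ?integral_cst//; first exact: measurableI.
by move=> x; rewrite inE => -[_]; rewrite /= in_itv/= /uniform_pdf => ->.
Qed.

Lemma uniform01_itvNy_le (R : realType) (x : R) : 0 <= x ->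
  (uniform_prob (@ltr01 R) `]-oo, x] <= x%:E)%E.
Proof.
move=> x0; rewrite uniform_probE// subr0 invr1 mul1e.
apply: (@le_trans _ _ (lebesgue_measure (`[0, x] : set R))).
  apply: le_measure; rewrite ?inE//; first exact: measurableI.
  by move=> y [/=]; rewrite !in_itv/= => -> /andP[->].
by rewrite lebesgue_measure_itv/= lte_fin; case: ltP; rewrite ?sube0 ?lee_fin.
Qed.

Lemma ge0_expectation_sum d (T : measurableType d) (R : realType)
    (P : probability T R) (I : Type) (s : seq I) (p : pred I) (X : I -> T -> R) :
  (forall i, measurable_fun setT (X i)) -> (forall i x, 0 <= X i x) ->
  ('E_P[fun x => (\sum_(i <- s | p i) X i x)%R] = \sum_(i <- s | p i) 'E_P[X i])%E.
Proof.
move=> mX X0; rewrite unlock.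
under eq_integral => x _ do rewrite -sumEFin big_mkcond.
rewrite ge0_integral_sum//.
- rewrite [RHS]big_mkcond; apply: eq_bigr => i _.
  by case: (p i); rewrite ?integral0.
- by move=> i; case: (p i) => //; exact/measurable_realfun.measurable_EFinP.
- by move=> i x _; case: (p i); rewrite ?lee_fin.
Qed.

Lemma measurable_sum_cond d (T : measurableType d) (R : realType)
    (I : Type) (s : seq I) (p : pred I) (X : I -> T -> R) :
  (forall i, measurable_fun setT (X i)) ->
  measurable_fun setT (fun x => \sum_(i <- s | p i) X i x).
Proof.
move=> mX; under eq_fun => x do rewrite big_mkcond.
by apply: measurable_sum => i; case: (p i).
Qed.

Lemma expectation_shuffle_size (R : realType) d (Omega : measurableType d)
    (P : probability Omega R) (N D k : nat) (docs : 'I_N -> {set 'I_D})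
    (h : 'I_N -> 'I_k -> {RV P >-> R}) (c : R) :
  ('E_P[shuffle_size c docs (fun t j => h t j)] =
   \sum_(t < N) \sum_(w in docs t) \sum_(j < k)
     P (h t j @^-1` `]-oo, threshold c k docs w]))%E.
Proof.
pose emit t w j := h t j @^-1` `]-oo, threshold c k docs w].
have memit t w j : measurable (emit t w j) by exact: measurable_funPTI.
have -> : shuffle_size c docs (fun t j => h t j) =
    (fun om => \sum_(t < N) \sum_(w in docs t) \sum_(j < k) \1_(emit t w j) om).
  apply/funext => om; apply: eq_bigr => t _; apply: eq_bigr => w _.
  apply: eq_bigr => j _; rewrite indicE; case: ifP => hle.
    by rewrite mem_set.
  by rewrite memNset// /emit/= in_itv/= hle.
have m1 t w j : measurable_fun setT (\1_(emit t w j) : Omega -> R).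
  exact: measurable_realfun.measurable_indic.
rewrite ge0_expectation_sum; first last.
- by move=> t om; do 2!apply: sumr_ge0 => ? _.
- by move=> t; do 2!apply: measurable_sum_cond => ?.
apply: eq_bigr => t _; rewrite ge0_expectation_sum; first last.
- by move=> w om; apply: sumr_ge0 => ? _.
- by move=> w; apply: measurable_sum_cond => ?.
apply: eq_bigr => w _; rewrite ge0_expectation_sum//.
by apply: eq_bigr => j _; rewrite expectation_indic.
Qed.

Lemma ln_nat_ge0 (R : realType) (n : nat) : 0 <= ln (n%:R : R).
Proof. by case: n => [|n]; [rewrite ln0 | rewrite ln_ge0// ler1n]. Qed.

Lemma threshold_ge0 (R : realType) (N D k : nat) (docs : 'I_N -> {set 'I_D})
    (c : R) (w : 'I_D) : 0 <= c -> 0 <= threshold c k docs w.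
Proof. by move=> c0; rewrite /threshold divr_ge0 ?mulr_ge0 ?ln_nat_ge0. Qed.

Lemma sum_mem_docs (V : nmodType) (N D : nat) (docs : 'I_N -> {set 'I_D})
    (f : 'I_D -> V) :
  \sum_(t < N) \sum_(w in docs t) f w = \sum_(w < D) f w *+ ndocs docs w.
Proof.
under eq_bigr => t _ do rewrite big_mkcond /=.
rewrite exchange_big /=; apply: eq_bigr => w _.
rewrite -big_mkcond /= sumr_const /ndocs; congr (_ *+ _).
by apply: eq_card => t; apply/idP/idP => [/mem_set|/set_mem].
Qed.

Lemma sum_threshold_le (R : realType) (N D k : nat) (docs : 'I_N -> {set 'I_D})
    (c : R) : 0 <= c ->
  \sum_(t < N) \sum_(w in docs t) \sum_(j < k) threshold c k docs w
    <= c * D%:R * k%:R * ln ((D * k)%:R).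
Proof.
move=> c0; have L0 : 0 <= c * ln ((D * k)%:R : R) by rewrite mulr_ge0 ?ln_nat_ge0.
under eq_bigr => t _ do under eq_bigr => w _ do rewrite sumr_const card_ord.
rewrite sum_mem_docs.
have -> : c * D%:R * k%:R * ln ((D * k)%:R) =
    \sum_(w < D) (c * ln ((D * k)%:R) *+ k) by rewrite sumr_const card_ord; ring.
apply: ler_sum => w _; rewrite /threshold.
case: (ndocs docs w) => [|n]; first by rewrite mulr0n mulrn_wge0.
by rewrite mulrnAC -[_ *+ n.+1]mulr_natr divfK ?pnatr_eq0.
Qed.

Theorem theorem6 (R : realType) (d : measure_display) (Omega : measurableType d)
    (P : probability Omega R) (N D k : nat) (docs : 'I_N -> {set 'I_D})
    (h : 'I_N -> 'I_k -> {RV P >-> R}) :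
  (0 < D)%N -> (0 < k)%N ->
  (forall t j A, measurable A ->
     distribution P (h t j) A = uniform_prob (@ltr01 R) A) ->
  mutually_independent (fun tj : 'I_N * 'I_k => h tj.1 tj.2) ->
  let c : R := 3 in
  ('E_P[shuffle_size c docs (fun t j => h t j)]
     <= (c * D%:R * k%:R * ln ((D * k)%:R))%:E)%E /\
  (forall eps : R, 0 < eps <= 1 -> k%:R = eps^-1 ->
     ('E_P[shuffle_size c docs (fun t j => h t j)]
        <= (c * (D%:R / eps) * ln (D%:R / eps))%:E)%E).
Proof.
move=> _ _ h_unif _ c.
have c0 : 0 <= c by [].
have bound : ('E_P[shuffle_size c docs (fun t j => h t j)]
    <= (c * D%:R * k%:R * ln ((D * k)%:R))%:E)%E.
  rewrite expectation_shuffle_size.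
  apply: (@le_trans _ _ (\sum_(t < N) \sum_(w in docs t) \sum_(j < k)
                            (threshold c k docs w)%:E)%E).
    apply: lee_sum => t _; apply: lee_sum => w _; apply: lee_sum => j _.
    rewrite -[P _]/(distribution P (h t j) _) h_unif//.
    exact/uniform01_itvNy_le/threshold_ge0.
  rewrite (eq_bigr _ (fun t _ => eq_bigr _ (fun w _ => sumEFin _ _ _))).
  by rewrite (eq_bigr _ (fun t _ => sumEFin _ _ _)) sumEFin lee_fin sum_threshold_le.
split=> // eps _ k_eps.
have -> : D%:R / eps = (D * k)%:R :> R by rewrite natrM k_eps.
by move: bound; rewrite !natrM !mulrA.
Qed.
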